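(* Let $\mathbf{K}$ be a linear canonical transformation of $\mathbb{C}^{2n}$. The following are equivalent: (i) $-1\notin\operatorname{Spec}\mathbf{K}$ and $\operatorname{Re}\sigma\big(\overline{\mathbf{z}},\,i(1+\mathbf{K})^{-1}(1-\mathbf{K})\mathbf{z}\big)<0$ for all $\mathbf{z}\in\mathbb{C}^{2n}\setminus\{0\}$; (ii) $-1\notin\operatorname{Spec}\mathbf{K}$ and $\operatorname{Re}\sigma\big(\mathbf{z},\,i(1+\mathbf{K})^{-1}(1-\mathbf{K})\mathbf{z}\big)<0$ for all $\mathbf{z}\in\mathbb{R}^{2n}\setminus\{0\}$; (iii) $\mathbf{K}$ is strictly positive.
   Context: Points of $\mathbb{C}^{2n}$ are written $\mathbf{z}=(x,\xi)$, and $\sigma((x_1,\xi_1),(x_2,\xi_2))=\xi_1\cdot x_2-\xi_2\cdot x_1$ (complex bilinear, no conjugation). A complex linear map $\mathbf{K}$ of $\mathbb{C}^{2n}$ is canonical if $\sigma(\mathbf{K}\mathbf{z},\mathbf{K}\mathbf{w})=\sigma(\mathbf{z},\mathbf{w})$ for all $\mathbf{z},\mathbf{w}$; it is strictly positive if it is canonical and $i\big(\sigma(\overline{\mathbf{K}\mathbf{z}},\mathbf{K}\mathbf{z})-\sigma(\overline{\mathbf{z}},\mathbf{z})\big)>0$ for all $\mathbf{z}\in\mathbb{C}^{2n}\setminus\{0\}$. *)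

(* C^{2n} is modelled as column vectors 'cV[C]_(n + n) over an
   arbitrary numeric closed field C (e.g. algC); the first n coordinates are x,
   the last n are xi. *)
From HB Require Import structures.
From mathcomp Require Import all_boot all_order all_algebra.
Set Implicit Arguments. Unset Strict Implicit. Unset Printing Implicit Defensive.
Import Order.TTheory GRing.Theory Num.Theory.
Local Open Scope ring_scope.

Definition sigma {C : numClosedFieldType} {n : nat} (z w : 'cV[C]_(n + n)) : C :=
  \sum_(j < n) (dsubmx z j 0 * usubmx w j 0 - dsubmx w j 0 * usubmx z j 0).

Definition conjv {C : numClosedFieldType} {n : nat} (z : 'cV[C]_(n + n)) :
  'cV[C]_(n + n) := map_mx (@Num.conj C) z.

Definition canonical {C : numClosedFieldType} {n : nat} (K : 'M[C]_(n + n)) : Prop :=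
  forall z w : 'cV[C]_(n + n), sigma (K *m z) (K *m w) = sigma z w.

Definition strictly_positive {C : numClosedFieldType} {n : nat}
  (K : 'M[C]_(n + n)) : Prop :=
  canonical K /\
  forall z : 'cV[C]_(n + n), z != 0 ->
    0 < 'i * (sigma (conjv (K *m z)) (K *m z) - sigma (conjv z) z).

Definition realv {C : numClosedFieldType} {n : nat} (z : 'cV[C]_(n + n)) : Prop :=
  forall i j, z i j \is Num.real.

Definition cayley {C : numClosedFieldType} {n : nat} (K : 'M[C]_(n + n)) :
  'M[C]_(n + n) := 'i *: (invmx (1%:M + K) *m (1%:M - K)).

(* Put z = (1 + K) w, so that cayley K z = i (w - K w).  Expanding, the
   quantity -Re sigma(conj z, cayley K z) equals
   i (sigma(conj (K w), K w) - sigma(conj w, w)), which gives (i) <-> (iii);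
   conversely strict positivity rules out K w = -w, so -1 is not an eigenvalue.
   Since K is canonical, the bilinear form (z, w) |-> sigma(z, cayley K w) is
   symmetric, hence for z = x + i y with x, y real the cross terms cancel and
   sigma(conj z, cayley K z) = sigma(x, cayley K x) + sigma(y, cayley K y);
   this gives (ii) -> (i), while (i) -> (ii) is the case z = conj z. *)
From HB Require Import structures.
From mathcomp Require Import all_boot all_order all_algebra ring.
Import Order.TTheory GRing.Theory Num.Theory.
Local Open Scope ring_scope.

Section SymplecticForm.
Context {C : numClosedFieldType} {n : nat}.
Implicit Types (z w : 'cV[C]_(n + n)) (c : C).

Lemma sigmaE z w :
  sigma z w = \sum_(j < n)
    (z (rshift n j) 0 * w (lshift n j) 0 - w (rshift n j) 0 * z (lshift n j) 0).
Proof. by apply: eq_bigr => j _; rewrite !mxE. Qed.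

Lemma sigma_antisym z w : sigma z w = - sigma w z.
Proof. by rewrite !sigmaE -sumrN; apply: eq_bigr => j _; ring. Qed.

Lemma sigmaDl z1 z2 w : sigma (z1 + z2) w = sigma z1 w + sigma z2 w.
Proof.
by rewrite !sigmaE -big_split; apply: eq_bigr => j _ /=; rewrite !mxE; ring.
Qed.

Lemma sigmaZl c z w : sigma (c *: z) w = c * sigma z w.
Proof. by rewrite !sigmaE mulr_sumr; apply: eq_bigr => j _; rewrite !mxE; ring. Qed.

Lemma sigmaNl z w : sigma (- z) w = - sigma z w.
Proof. by rewrite -scaleN1r sigmaZl mulN1r. Qed.

Lemma sigmaBl z1 z2 w : sigma (z1 - z2) w = sigma z1 w - sigma z2 w.
Proof. by rewrite sigmaDl sigmaNl. Qed.

Lemma sigma0l w : sigma 0 w = 0.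
Proof. by rewrite -(scale0r 0) sigmaZl mul0r. Qed.

Lemma sigmaDr z w1 w2 : sigma z (w1 + w2) = sigma z w1 + sigma z w2.
Proof. by rewrite sigma_antisym sigmaDl opprD -!sigma_antisym. Qed.

Lemma sigmaZr c z w : sigma z (c *: w) = c * sigma z w.
Proof. by rewrite sigma_antisym sigmaZl -mulrN -sigma_antisym. Qed.

Lemma sigmaNr z w : sigma z (- w) = - sigma z w.
Proof. by rewrite -scaleN1r sigmaZr mulN1r. Qed.

Lemma sigmaBr z w1 w2 : sigma z (w1 - w2) = sigma z w1 - sigma z w2.
Proof. by rewrite sigmaDr sigmaNr. Qed.

Lemma conj_sigma z w : (sigma z w)^* = sigma (conjv z) (conjv w).
Proof.
rewrite !sigmaE rmorph_sum; apply: eq_bigr => j _.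
by rewrite /conjv !mxE rmorphB !rmorphM.
Qed.

Lemma conjvD z w : conjv (z + w) = conjv z + conjv w.
Proof. by apply/matrixP => i j; rewrite !mxE rmorphD. Qed.

Lemma conjvZ c z : conjv (c *: z) = c^* *: conjv z.
Proof. by apply/matrixP => i j; rewrite !mxE rmorphM. Qed.

Lemma conjvN z : conjv (- z) = - conjv z.
Proof. by apply/matrixP => i j; rewrite !mxE rmorphN. Qed.

Lemma conjvK z : conjv (conjv z) = z.
Proof. by apply/matrixP => i j; rewrite !mxE conjCK. Qed.

Lemma realv_conjv {z} : realv z -> conjv z = z.
Proof. by move=> rz; apply/matrixP => i j; rewrite mxE conj_Creal. Qed.

Definition Rev z : 'cV[C]_(n + n) := map_mx (fun t => 'Re t) z.
Definition Imv z : 'cV[C]_(n + n) := map_mx (fun t => 'Im t) z.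

Lemma realv_Rev z : realv (Rev z).
Proof. by move=> i j; rewrite mxE Creal_Re. Qed.

Lemma realv_Imv z : realv (Imv z).
Proof. by move=> i j; rewrite mxE Creal_Im. Qed.

Lemma cV_rect z : z = Rev z + 'i *: Imv z.
Proof. by apply/matrixP => i j; rewrite !mxE -Crect. Qed.

Lemma conjv_rect z : conjv z = Rev z - 'i *: Imv z.
Proof.
by rewrite {1}[z]cV_rect conjvD conjvZ conjCi scaleNr
  (realv_conjv (realv_Rev z)) (realv_conjv (realv_Imv z)).
Qed.

Lemma sigma_conjv_rect (A : 'M[C]_(n + n)) z :
  (forall u v, sigma u (A *m v) = sigma v (A *m u)) ->
  sigma (conjv z) (A *m z) =
  sigma (Rev z) (A *m Rev z) + sigma (Imv z) (A *m Imv z).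
Proof.
move=> Asym; rewrite conjv_rect [in A *m z](cV_rect z) mulmxDr -scalemxAr.
rewrite sigmaBl !sigmaDr !sigmaZl !sigmaZr (Asym (Imv z) (Rev z)) mulrA mulCii.
ring.
Qed.

End SymplecticForm.

Lemma colmx_kernelPn (F : fieldType) m (A : 'M[F]_m) :
  A \notin unitmx -> exists2 w : 'cV[F]_m, w != 0 & A *m w = 0.
Proof.
rewrite unitmxE unitfE negbK -det_tr => /det0P [v nz_v vA0].
by exists v^T; rewrite ?trmx_eq0 // -[A]trmxK -trmx_mul vA0 trmx0.
Qed.

Section Cayley.
Context {C : numClosedFieldType} {n : nat} (K : 'M[C]_(n + n)).

Lemma eigenvalueN1_unitmx : ~~ eigenvalue K (-1) = (1%:M + K \in unitmx).
Proof.
rewrite /eigenvalue /eigenspace negbK kermx_eq0 row_free_unit.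
by rewrite raddfN /= opprK addrC.
Qed.

Lemma strictly_positive_unitmx : strictly_positive K -> 1%:M + K \in unitmx.
Proof.
case=> _ Kpos; apply/negPn/negP => /colmx_kernelPn [w nz_w Kw0].
have Kw : K *m w = - w.
  by apply/eqP; rewrite -subr_eq0 opprK addrC -{1}[w]mul1mx -mulmxDl Kw0.
have := Kpos w nz_w.
by rewrite Kw conjvN sigmaNl sigmaNr opprK subrr mulr0 ltxx.
Qed.

Hypothesis unitK : 1%:M + K \in unitmx.

Lemma mulmxVaddK (z : 'cV[C]_(n + n)) : z = (1%:M + K) *m (invmx (1%:M + K) *m z).
Proof. by rewrite mulmxA mulmxV // mul1mx. Qed.

Lemma cayley_mul_addK (w : 'cV[C]_(n + n)) :
  cayley K *m ((1%:M + K) *m w) = 'i *: (w - K *m w).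
Proof.
rewrite /cayley -scalemxAl; congr (_ *: _).
have comm : (1%:M - K) *m (1%:M + K) = (1%:M + K) *m (1%:M - K).
  rewrite mulmxBl mulmxDl !mul1mx !mulmxDr mulmxN !mulmx1.
  by rewrite opprD addrA addrK addrA subrK.
by rewrite mulmxA -(mulmxA (invmx _)) comm mulmxA mulVmx // mul1mx mulmxBl mul1mx.
Qed.

Lemma positivity_cayleyE (w : 'cV[C]_(n + n)) :
  'i * (sigma (conjv (K *m w)) (K *m w) - sigma (conjv w) w) =
  - 'Re (sigma (conjv ((1%:M + K) *m w)) (cayley K *m ((1%:M + K) *m w))).
Proof.
rewrite cayley_mul_addK mulmxDl mul1mx conjvD ReE sigmaDl !sigmaZr !sigmaBr.
rewrite !(rmorphM, rmorphD, rmorphB, rmorphN) /= conjCi !conj_sigma !conjvK.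
rewrite (sigma_antisym w (conjv w)) (sigma_antisym (K *m w) (conjv w)).
rewrite (sigma_antisym w (conjv (K *m w))) (sigma_antisym (K *m w) (conjv (K *m w))).
by field.
Qed.

Lemma sigma_cayley_sym : canonical K ->
  forall z w : 'cV[C]_(n + n), sigma z (cayley K *m w) = sigma w (cayley K *m z).
Proof.
move=> Kcan z w; rewrite [z]mulmxVaddK [w]mulmxVaddK.
move: (invmx _ *m z) (invmx _ *m w) => {}z {}w.
rewrite !cayley_mul_addK !mulmxDl !mul1mx !sigmaDl !sigmaZr !sigmaBr !Kcan.
rewrite (sigma_antisym w z) (sigma_antisym w (K *m z)) (sigma_antisym (K *m w) z).
ring.
Qed.

End Cayley.

Section Equivalences.
Context {C : numClosedFieldType} {n : nat} (K : 'M[C]_(n + n)).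
Hypothesis Kcan : canonical K.

Lemma cayley_neg_strictly_positive :
  (~~ eigenvalue K (-1) /\
     forall z : 'cV[C]_(n + n), z != 0 ->
       'Re (sigma (conjv z) (cayley K *m z)) < 0)
  <-> strictly_positive K.
Proof.
split=> [[] | Kpos].
  rewrite eigenvalueN1_unitmx => unitK Cneg; split=> // w nz_w.
  rewrite positivity_cayleyE // oppr_gt0; apply: Cneg.
  apply: contra nz_w => /eqP w0.
  by rewrite -[w]mul1mx -(mulVmx unitK) -mulmxA w0 mulmx0.
have unitK := strictly_positive_unitmx K Kpos.
rewrite eigenvalueN1_unitmx; split=> // z nz_z.
rewrite [z](mulmxVaddK K unitK) -oppr_gt0 -positivity_cayleyE //; apply: Kpos.2.
by apply: contra nz_z => /eqP w0; rewrite [z](mulmxVaddK K unitK) w0 mulmx0.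
Qed.

Lemma cayley_neg_real :
  (~~ eigenvalue K (-1) /\
     forall z : 'cV[C]_(n + n), z != 0 ->
       'Re (sigma (conjv z) (cayley K *m z)) < 0)
  <-> (~~ eigenvalue K (-1) /\
     forall z : 'cV[C]_(n + n), realv z -> z != 0 ->
       'Re (sigma z (cayley K *m z)) < 0).
Proof.
split=> -[noeig Cneg]; split=> // z.
  by move=> rz nz_z; rewrite -{1}(realv_conjv rz); apply: Cneg.
move=> nz_z; move: noeig; rewrite eigenvalueN1_unitmx => unitK.
have Cnonpos v : realv v -> 'Re (sigma v (cayley K *m v)) <= 0.
  move=> rv; have [->|nz_v] := eqVneq v 0; last exact/ltW/Cneg.
  by rewrite sigma0l raddf0.
rewrite sigma_conjv_rect; last exact: sigma_cayley_sym.
rewrite raddfD /= -[0]addr0.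
have [Re0|nz_Re] := eqVneq (Rev z) 0; last first.
  exact: ltr_leD (Cneg _ (realv_Rev z) nz_Re) (Cnonpos _ (realv_Imv z)).
have nz_Im : Imv z != 0.
  by apply: contra nz_z => /eqP Im0; rewrite [z]cV_rect Re0 Im0 scaler0 addr0.
exact: ler_ltD (Cnonpos _ (realv_Rev z)) (Cneg _ (realv_Imv z) nz_Im).
Qed.

End Equivalences.

Theorem proposition4p3 (C : numClosedFieldType) (n : nat) (K : 'M[C]_(n + n)) :
  canonical K ->
  [/\ (~~ eigenvalue K (-1) /\
       forall z : 'cV[C]_(n + n), z != 0 ->
         'Re (sigma (conjv z) (cayley K *m z)) < 0)
    <-> strictly_positive K,
      (~~ eigenvalue K (-1) /\
       forall z : 'cV[C]_(n + n), realv z -> z != 0 ->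
         'Re (sigma z (cayley K *m z)) < 0)
    <-> strictly_positive K
    & (~~ eigenvalue K (-1) /\
       forall z : 'cV[C]_(n + n), z != 0 ->
         'Re (sigma (conjv z) (cayley K *m z)) < 0)
    <-> (~~ eigenvalue K (-1) /\
       forall z : 'cV[C]_(n + n), realv z -> z != 0 ->
         'Re (sigma z (cayley K *m z)) < 0)].
Proof.
move=> Kcan; have i_iii := cayley_neg_strictly_positive K Kcan.
have i_ii := cayley_neg_real K Kcan.
by split=> //; rewrite -i_iii; split=> /i_ii.
Qed.
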